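(* For every $m\ge0$ and $n\ge1$ there is a bijection between $Q_3(m,n)$ and $P_3(-m,n)$.
   Context: Partitions: $\lambda_1\ge\cdots\ge\lambda_\ell>0$, $\ell(\lambda)=\ell$, $\lambda_i=0$ for $i>\ell$, $s(\lambda)$ the smallest part with $s(\emptyset)=+\infty$. Rank $=\lambda_1-\ell$; rank-set $=[-\lambda_1,1-\lambda_2,\dots,\ell-1-\lambda_\ell,\ell,\ell+1,\dots]$. $Q(m,n)$: partitions of $n$ whose rank-set contains $m$; $P(-m,n)$: partitions of $n$ with rank $\ge-m$. $m$-Durfee rectangle symbol $(\alpha,\beta)_{(m+j)\times j}$ of $\lambda$: $j\ge0$ is the largest integer with $\lambda_{m+j}\ge j$; $\alpha$ is the conjugate of $(\lambda_1-j,\dots,\lambda_{m+j}-j)$ and $\beta=(\lambda_{m+j+1},\lambda_{m+j+2},\dots)$; $|\lambda|=|\alpha|+|\beta|+j(m+j)$. $Q_3(m,n)$ is the set of $\lambda\in Q(m,n)$ whose symbol has $j\ge1$, $\ell(\beta)-\ell(\alpha)\ge1$, $\alpha_1=m+j$ and $s(\beta)=1$. $P_3(-m,n)$ is the set of $\mu\in P(-m,n)$ whose symbol $(\gamma,\delta)_{(m+j')\times j'}$ has $j'\ge2$ and $\delta_1\le j'-2$. *)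

(* Integer partitions represented as seq nat (weakly
   decreasing, positive parts); lambda_i (1-indexed) = nth 0 l (i-1),
   so lambda_i = 0 for i > ell. *)
From mathcomp Require Import all_boot all_order all_algebra.
Set Implicit Arguments. Unset Strict Implicit. Unset Printing Implicit Defensive.
Import GRing.Theory Num.Theory.

Definition part (l : seq nat) (i : nat) : nat :=
  if i is i'.+1 then nth 0 l i' else 0.

Definition is_partition (l : seq nat) : bool :=
  sorted geq l && all (fun x => 0 < x) l.

Definition partition_of (n : nat) (l : seq nat) : bool :=
  is_partition l && (sumn l == n).

Definition rank (l : seq nat) : int := (Posz (part l 1) - Posz (size l))%R.

Definition in_rankset (l : seq nat) (x : int) : Prop :=
  (exists2 i, (1 <= i <= size l)%N & x = (Posz (i.-1) - Posz (part l i))%R)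
  \/ ((Posz (size l)) <= x)%R.

Definition Qset (m n : nat) (l : seq nat) : Prop :=
  partition_of n l /\ in_rankset l (Posz m).

Definition Pset (m n : nat) (l : seq nat) : Prop :=
  partition_of n l /\ (- (Posz m) <= rank l)%R.

(* conjugate of a (finite) sequence of naturals: k-th part (1-indexed) is
   the number of entries >= k *)
Definition conj (s : seq nat) : seq nat :=
  mkseq (fun k => count (fun x => k < x) s) (foldr maxn 0 s).

(* m-Durfee rectangle: j = largest j >= 0 with lambda_{m+j} >= j
   (j = 0 always qualifies; any j >= 1 that qualifies has m+j <= ell,
   so j <= ell, hence the bounded max is the true max). *)
Definition durfee_ok (m : nat) (l : seq nat) (j : nat) : bool :=
  (j == 0) || (j <= part l (m + j)).

Definition durfee_j (m : nat) (l : seq nat) : nat :=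
  \max_(j < (size l).+1 | durfee_ok m l j) (j : nat).

Definition durfee_alpha (m : nat) (l : seq nat) : seq nat :=
  let j := durfee_j m l in
  conj [seq part l i - j | i <- iota 1 (m + j)].

Definition durfee_beta (m : nat) (l : seq nat) : seq nat :=
  drop (m + durfee_j m l) l.

(* smallest part; None encodes s(empty) = +infinity *)
Definition spart (l : seq nat) : option nat :=
  if l is x :: t then Some (foldr minn x t) else None.

Definition Q3 (m n : nat) (l : seq nat) : Prop :=
  Qset m n l /\
  let j := durfee_j m l in
  let a := durfee_alpha m l in
  let b := durfee_beta m l in
  [/\ (1 <= j)%N, (1 <= (Posz (size b)) - (Posz (size a)))%R,
      part a 1 = (m + j)%N & spart b = Some 1%N].

Definition P3 (m n : nat) (mu : seq nat) : Prop :=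
  Pset m n mu /\
  let j' := durfee_j m mu in
  let d := durfee_beta m mu in
  (2 <= j')%N /\ (part d 1 <= j' - 2)%N.

From mathcomp Require Import all_boot all_order all_algebra.
From mathcomp Require Import zify.
Set Implicit Arguments. Unset Strict Implicit.

(* Both sets are described by the same combinatorial data: a positive [j], a
   decreasing sequence [p] of [m + j] parts all larger than [j] (the rows
   meeting the m-Durfee rectangle), and a decreasing sequence [d] of positive
   parts smaller than [j] (the record [blocks]).  A partition of Q_3(m,n) with
   Durfee side [j] is exactly [p ++ j :: (d + 1) ++ 1^c] with [c >= 1] and
   [p_1 <= j + |d| + c] ([Qform]); a partition of P_3(-m,n) with Durfee side
   [j + 1] is exactly [h :: p ++ d] with [h >= p_1] and [h > j + |d|]
   ([Pform]).  The bijection keeps [p] and [d] and exchanges the count [c] of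
   ones with the new first row [h = j + |d| + c]. *)

Lemma geq_trans : transitive geq.
Proof. by move=> a b c /= h1 h2; apply: leq_trans h2 h1. Qed.

Lemma nth_geq (l : seq nat) i k : sorted geq l -> i <= k -> nth 0 l k <= nth 0 l i.
Proof.
move=> sl le_ik; case: (ltnP k (size l)) => hk; last by rewrite nth_default.
apply: (sorted_leq_nth geq_trans (fun x => leqnn x)) => //; rewrite inE; lia.
Qed.

Lemma part_geq l a b : sorted geq l -> 0 < a <= b -> part l b <= part l a.
Proof. by case: a => // a; case: b => // b sl /= h; apply: nth_geq. Qed.

Lemma part_gt0_size l i : 0 < part l i -> i <= size l.
Proof.
case: i => // i /=; case: (ltnP i (size l)) => // hi.
by rewrite nth_default.
Qed.

Lemma part_in_take l k : 0 < k <= size l -> part l k \in take k l.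
Proof.
case: k => // k /andP[_ hk] /=.
by rewrite -(nth_take 0 (ltnSn k)) mem_nth // size_takel.
Qed.

Lemma mem_take_geq l k x : sorted geq l -> x \in take k l -> part l k <= x.
Proof.
move=> sl hx; have hi : index x (take k l) < size (take k l) by rewrite index_mem.
rewrite -(nth_index 0 hx) nth_take; last by move: hi; rewrite size_take; case: ifP; lia.
case: k hx hi => [|k] hx hi /=; first by rewrite take0 in hx.
apply: nth_geq => //; move: hi; rewrite size_take; case: ifP; lia.
Qed.

Lemma mem_drop_leq l k x : sorted geq l -> x \in drop k l -> x <= part l k.+1.
Proof. by move=> sl hx; rewrite /= -(nth_index 0 hx) nth_drop; apply: nth_geq => //; lia. Qed.

Lemma sorted_geq_cat (s1 s2 : seq nat) k : sorted geq s1 -> sorted geq s2 ->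
  {in s1, forall x, k <= x} -> {in s2, forall y, y <= k} -> sorted geq (s1 ++ s2).
Proof.
move=> ss1 ss2 h1 h2.
rewrite (sorted_pairwise geq_trans) pairwise_cat -!(sorted_pairwise geq_trans) ss1 ss2.
rewrite !andbT; apply/allrelP => x y /h1 hx /h2 hy; apply: leq_trans hy hx.
Qed.

Lemma sorted_geq_cons x (s : seq nat) : sorted geq s -> {in s, forall y, y <= x} ->
  sorted geq (x :: s).
Proof.
move=> ss hx; rewrite /= path_sortedE ?ss ?andbT; last exact: geq_trans.
by apply/allP.
Qed.

Lemma sorted_nseq_geq k (x : nat) : sorted geq (nseq k x).
Proof. by elim: k => // [[|k]] //= ->; rewrite leqnn. Qed.

Lemma sorted_map_succ (s : seq nat) : sorted geq s -> sorted geq (map succn s).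
Proof. by apply: homo_sorted => x y. Qed.

Lemma foldr_maxn_sorted (s : seq nat) : sorted geq s -> foldr maxn 0 s = head 0 s.
Proof.
elim: s => //= x s IH hs; rewrite IH ?(path_sorted hs) //.
case: s hs {IH} => [|y s] /=; first by rewrite maxn0.
by case/andP=> yx _; apply/maxn_idPl.
Qed.

Lemma sumn_map_succ (d : seq nat) : sumn (map succn d) = sumn d + size d.
Proof. by elim: d => //= x d ->; lia. Qed.

Lemma split_ones r : sorted geq r -> all (fun x => 0 < x) r ->
  r = map succn [seq x.-1 | x <- r & 1 < x] ++ nseq (count (pred1 1) r) 1.
Proof.
elim: r => //= x t IH /[dup] /path_sorted st; rewrite path_sortedE; last exact: geq_trans.
case/andP=> /allP le_x _ /andP[x_gt0 tpos]; rewrite {1}(IH st tpos).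
case: (ltnP 1 x) => hx /=; first by rewrite prednK ?(gtn_eqF hx) //; lia.
have -> : x = 1 by lia.
have -> : [seq y <- t | 1 < y] = [::].
  by apply/eqP; rewrite -[_ == _]negbK -has_filter; apply/hasPn => y /le_x /=; lia.
by [].
Qed.

Lemma split_onesK d k : all (fun x => 0 < x) d ->
  [seq x.-1 | x <- map succn d ++ nseq k 1 & 1 < x] = d.
Proof.
elim: d => [_|x d IH /andP[x0 /IH {}IH]] /=; first by elim: k.
by rewrite ltnS x0 /= IH.
Qed.

Lemma foldr_minn_mem (x : nat) t : foldr minn x t \in x :: t.
Proof.
elim: t => [|y t IH] /=; first exact: mem_head.
rewrite /minn; case: ltnP => _; first by rewrite !inE eqxx orbT.
by move: IH; rewrite !inE => /orP[-> | ->]; rewrite ?orbT.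
Qed.

Lemma foldr_minn_leq (x : nat) t y : y \in x :: t -> foldr minn x t <= y.
Proof.
elim: t => [|z t IH] /=; first by rewrite inE => /eqP ->.
rewrite !inE geq_min => /or3P[hy | /eqP -> | hy]; rewrite ?leqnn //;
  by rewrite IH ?orbT // inE hy ?orbT.
Qed.

Lemma durfee_okE m l j : durfee_ok m l j = (j <= part l (m + j)).
Proof. by rewrite /durfee_ok; case: j. Qed.

Lemma durfee_j_ok m l : durfee_j m l <= part l (m + durfee_j m l).
Proof.
rewrite -durfee_okE /durfee_j (bigmax_eq_arg (ord0 : 'I_(size l).+1)) //.
by case: arg_maxnP.
Qed.

Lemma durfee_j_max m l k : k <= part l (m + k) -> k <= durfee_j m l.
Proof.
case: k => // k hk; have hsz : k.+1 < (size l).+1.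
  by rewrite ltnS; have := part_gt0_size (leq_ltn_trans (leq0n k) hk); lia.
apply: (@leq_bigmax_cond _ (fun j : 'I_(size l).+1 => durfee_ok m l j)
  (fun j => nat_of_ord j) (Ordinal hsz)).
by rewrite durfee_okE.
Qed.

Lemma durfee_j_next m l : part l (m + durfee_j m l).+1 <= durfee_j m l.
Proof.
rewrite leqNgt; apply/negP => hgt.
by have := @durfee_j_max m l (durfee_j m l).+1; rewrite addnS; lia.
Qed.

Lemma durfee_jE m l j : sorted geq l ->
  j <= part l (m + j) -> part l (m + j).+1 <= j -> durfee_j m l = j.
Proof.
move=> sl ok next; apply/eqP; rewrite eqn_leq durfee_j_max // andbT leqNgt.
apply/negP => lt; have := durfee_j_ok m l.
have := part_geq (a := (m + j).+1) (b := m + durfee_j m l) sl; lia.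
Qed.

Lemma size_conj s : size (conj s) = foldr maxn 0 s.
Proof. exact: size_mkseq. Qed.

Lemma part_conj1 s : part (conj s) 1 = count (fun x => 0 < x) s.
Proof.
rewrite /= /conj; case: (posnP (foldr maxn 0 s)) => [hmax | hpos]; last by rewrite nth_mkseq.
rewrite hmax /=; apply/esym/eqP; rewrite -leqn0 leqNgt -has_count; apply/hasPn => x hx.
suff : x <= foldr maxn 0 s by rewrite hmax; lia.
by elim: s hx {hmax} => //= y s IH; rewrite inE leq_max => /orP[/eqP->|/IH->];
  rewrite ?leqnn ?orbT.
Qed.

Lemma durfee_alphaE m l : m + durfee_j m l <= size l ->
  durfee_alpha m l = conj [seq x - durfee_j m l | x <- take (m + durfee_j m l) l].
Proof.
move=> hsz; rewrite /durfee_alpha -(map_nth_iota0 0 hsz) -map_comp.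
by rewrite -[1]/(1 + 0) iotaDl -map_comp.
Qed.

Lemma in_rankset_durfee m j l : sorted geq l -> 0 < j -> j < part l (m + j) ->
  part l (m + j).+1 <= j -> in_rankset l (Posz m) <-> part l (m + j).+1 = j.
Proof.
move=> sl j_gt0 jlt next; have szl := part_gt0_size (leq_ltn_trans (leq0n j) jlt).
split=> [[[i /andP[i1 isz] /eqP e]|le_szm]|hj]; last 1 first.
- left; exists (m + j).+1; last by rewrite hj /=; lia.
  by have := @part_gt0_size l (m + j).+1; rewrite hj => /(_ j_gt0); lia.
- have [lt_i|le_i] := ltnP (m + j).+1 i.
    by have := part_geq sl (a := (m + j).+1) (b := i); lia.
  have [eq_i|ne_i] := eqVneq i (m + j).+1; first by move: e; rewrite eq_i /=; lia.
  by have := part_geq sl (a := i) (b := m + j); lia.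
- by move: le_szm; lia.
Qed.

Record blocks (m j : nat) (p d : seq nat) : Prop := Blocks {
  blocks_j_gt0 : 0 < j;
  blocks_size_p : size p = m + j;
  blocks_sorted_p : sorted geq p;
  blocks_p_gt : all (fun x => j < x) p;
  blocks_sorted_d : sorted geq d;
  blocks_d_bnd : all (fun x => 0 < x < j) d }.

Definition Qform (j : nat) (p d : seq nat) (c : nat) : seq nat :=
  p ++ j :: map succn d ++ nseq c 1.

Definition Pform (h : nat) (p d : seq nat) : seq nat := h :: p ++ d.

(* The bijection.  [Q_to_P] deletes the row [j] just below the Durfee rectangle
   and all rows of length 1, shortens the remaining lower rows by one cell, and
   puts on top a new first row of length [ell - m - 1]; [P_to_Q] undoes this,
   reading [j] off the Durfee side [j + 1] of its argument. *)
Definition Q_to_P (m : nat) (l : seq nat) : seq nat :=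
  let j := durfee_j m l in
  (size l - m.+1) :: take (m + j) l ++ [seq x.-1 | x <- drop (m + j).+1 l & 1 < x].

Definition P_to_Q (m : nat) (mu : seq nat) : seq nat :=
  let j := (durfee_j m mu).-1 in
  let d := drop (m + j).+1 mu in
  take (m + j) (behead mu) ++ j :: map succn d ++ nseq (head 0 mu - j - size d) 1.

Section Blocks.
Variables (m j : nat) (p d : seq nat).
Hypothesis blk : blocks m j p d.

Let j_gt0 := blocks_j_gt0 blk.
Let size_p := blocks_size_p blk.
Let sorted_p := blocks_sorted_p blk.
Let p_gt := blocks_p_gt blk.
Let sorted_d := blocks_sorted_d blk.
Let d_bnd := blocks_d_bnd blk.

Let part_p_last : j < part p (m + j).
Proof.
have hp : 0 < m + j <= size p by rewrite size_p leqnn andbT; lia.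
by have := part_in_take hp; rewrite take_oversize ?size_p // => /(allP p_gt).
Qed.

Let part_d_first : part d 1 < j.
Proof. by case: d d_bnd => [|x t] /= => [|/andP[/andP[]]]. Qed.

Let part_p_first : j < part p 1.
Proof. by have := part_geq (a := 1) (b := m + j) sorted_p; lia. Qed.

Lemma Qform_partition c : is_partition (Qform j p d c).
Proof.
have [p_j d_j] : {in p, forall x, j < x} /\ {in d, forall x, 0 < x < j}.
  by split; apply/allP.
have tail_j : {in map succn d ++ nseq c 1, forall y, y <= j}.
  by move=> y; rewrite mem_cat mem_nseq => /orP[/mapP[x /d_j hx] |/andP[_ /eqP]] ->; lia.
apply/andP; split.
  apply: (sorted_geq_cat (k := j)) sorted_p _ _ _.
  - apply: sorted_geq_cons tail_j.
    apply: (sorted_geq_cat (k := 1)); rewrite ?sorted_map_succ ?sorted_nseq_geq //.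
      by move=> y /mapP[x _ ->].
    by move=> y; rewrite mem_nseq => /andP[_ /eqP ->].
  - by move=> x /p_j /ltnW.
  - by move=> y; rewrite inE => /orP[/eqP -> // | /tail_j].
apply/allP => y; rewrite mem_cat inE mem_cat mem_nseq.
by case/or3P => [/p_j | /eqP -> | /orP[/mapP[x _ ->] | /andP[_ /eqP ->]]]; lia.
Qed.

Lemma Pform_partition h : part p 1 <= h -> is_partition (Pform h p d).
Proof.
move=> hp1; have [p_j d_j] : {in p, forall x, j < x} /\ {in d, forall x, 0 < x < j}.
  by split; apply/allP.
have p_h : {in p, forall x, x <= h}.
  move=> x hx; have := mem_drop_leq (k := 0) (x := x) sorted_p.
  by rewrite drop0 => /(_ hx); lia.
apply/andP; split.
  apply: sorted_geq_cons.
    apply: (sorted_geq_cat (k := j)) sorted_p sorted_d _ _.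
      by move=> x /p_j /ltnW.
    by move=> y /d_j; lia.
  by move=> y; rewrite mem_cat => /orP[/p_h | /d_j]; lia.
apply/allP => y; rewrite inE mem_cat.
by case/or3P => [/eqP -> | /p_j | /d_j]; have := part_p_first; lia.
Qed.

Lemma sumn_Qform c : sumn (Qform j p d c) = sumn (Pform (j + size d + c) p d).
Proof. by rewrite /= !sumn_cat /= sumn_cat sumn_map_succ sumn_nseq; lia. Qed.

Lemma part_Qform_p c i : 0 < i <= m + j -> part (Qform j p d c) i = part p i.
Proof. by case: i => // i /= hi; rewrite nth_cat size_p ifT //; lia. Qed.

Lemma drop_Qform c : drop (m + j) (Qform j p d c) = j :: map succn d ++ nseq c 1.
Proof. by rewrite drop_cat size_p ltnn subnn drop0. Qed.

Lemma durfee_Qform c : durfee_j m (Qform j p d c) = j.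
Proof.
case/andP: (Qform_partition c) => sq _; apply: durfee_jE => //.
  by rewrite part_Qform_p ?leqnn ?andbT; lia.
by rewrite /= nth_cat size_p ltnn subnn.
Qed.

Lemma durfee_Pform h : part p 1 <= h -> durfee_j m (Pform h p d) = j.+1.
Proof.
move=> hp1; case/andP: (Pform_partition hp1) => sorted_pf _.
have e : m + j = (m + j).-1.+1 by lia.
apply: durfee_jE => //; rewrite !addnS /=; last first.
  by rewrite nth_cat size_p ltnn subnn; move: part_d_first => /=; lia.
by move: part_p_last; rewrite {1 2}e /= nth_cat size_p ifT //; lia.
Qed.

Lemma Q_to_P_Qform c : Q_to_P m (Qform j p d c) = Pform (j + size d + c) p d.
Proof.
rewrite /Q_to_P durfee_Qform -[(m + j).+1]/(1 + (m + j)) -drop_drop drop_Qform /= drop0.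
rewrite split_onesK; last by apply/allP => x /(allP d_bnd) /andP[].
rewrite /Qform -size_p take_size_cat // size_cat /= size_cat size_map size_nseq.
by congr (_ :: _); lia.
Qed.

Lemma P_to_Q_Pform h : part p 1 <= h -> P_to_Q m (Pform h p d) = Qform j p d (h - j - size d).
Proof.
move=> hp1; rewrite /P_to_Q durfee_Pform //= -size_p take_size_cat //.
by rewrite drop_size_cat.
Qed.

Lemma Q3_Qform n c : 0 < c -> part p 1 <= j + size d + c ->
  sumn (Qform j p d c) = n -> Q3 m n (Qform j p d c).
Proof.
move=> c_gt0 hp1 sum_n; have /andP[sorted_l _] := Qform_partition c.
have size_l : size (Qform j p d c) = m + j + (size d + c).+1.
  by rewrite size_cat /= size_cat size_map size_nseq size_p.
have part_next : part (Qform j p d c) (m + j).+1 = j.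
  by rewrite /= nth_cat size_p ltnn subnn.
have part_last : j < part (Qform j p d c) (m + j).
  by rewrite part_Qform_p ?leqnn ?andbT; lia.
split.
  split; first by rewrite /partition_of Qform_partition sum_n eqxx.
  by apply/(in_rankset_durfee sorted_l j_gt0 part_last (eq_leq part_next)).
rewrite /durfee_beta durfee_alphaE; last by rewrite (durfee_Qform c) size_l leq_addr.
rewrite (durfee_Qform c) (drop_Qform c) /Qform -size_p take_size_cat // size_p.
have sorted_pj : sorted geq [seq x - j | x <- p].
  by apply: homo_sorted sorted_p => x y /=; apply: leq_sub2r.
split => //.
- rewrite size_conj foldr_maxn_sorted //= size_cat size_map size_nseq.
  by case: p size_p hp1 => [|x t] /=; lia.
- rewrite part_conj1 -[RHS]size_p -(size_map (subn^~ j)); apply/eqP.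
  rewrite -all_count all_map.
  by apply/allP => x /(allP p_gt) /=; rewrite subn_gt0.
- congr Some; apply/eqP; rewrite eqn_leq foldr_minn_leq; last first.
    by rewrite inE mem_cat mem_nseq c_gt0 eqxx !orbT.
  apply/andP; split=> //; have := foldr_minn_mem j (map succn d ++ nseq c 1).
  by rewrite inE mem_cat mem_nseq => /or3P[/eqP -> | /mapP[x _ ->] | /andP[_ /eqP ->]].
Qed.

Lemma P3_Pform n h : part p 1 <= h -> j + size d < h ->
  sumn (Pform h p d) = n -> P3 m n (Pform h p d).
Proof.
move=> hp1 hsz sum_n; split.
  split; first by rewrite /partition_of Pform_partition // sum_n eqxx.
  by rewrite /rank /= size_cat size_p; lia.
rewrite /= /durfee_beta durfee_Pform // addnS /= -size_p drop_size_cat //.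
by move: part_d_first => /=; lia.
Qed.

End Blocks.

Lemma P3_blocks m n mu : P3 m n mu ->
  exists h j p d, [/\ blocks m j p d, part p 1 <= h, j + size d < h & mu = Pform h p d].
Proof.
case=> [[/andP[/andP[sorted_mu pos] _]]]; rewrite /rank /durfee_beta /= => rk.
case: (durfee_j m mu) (durfee_j_ok m mu) => [|j] ok [] // j_gt0 hd.
case: mu sorted_mu pos rk ok hd => [|h t]; first by move=> _ _ _; rewrite addnS /= nth_nil.
move=> sorted_mu /andP[_ pos] rk.
have e : m + j = (m + j).-1.+1 by lia.
rewrite !addnS /= nth_drop addn0 => ok hd; rewrite [in nth _ _ _]e /= in ok.
have last_t : j < part t (m + j) by rewrite e.
have size_t : m + j <= size t by apply: part_gt0_size; lia.
have sorted_t : sorted geq t := path_sorted sorted_mu.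
exists h, j, (take (m + j) t), (drop (m + j) t); split.
- split=> //; first by rewrite size_takel.
  + exact: take_sorted.
  + by apply/allP => x /(mem_take_geq sorted_t); lia.
  + exact: drop_sorted.
  + apply/allP => x hx; rewrite (allP pos) ?(mem_drop hx) //=.
    by have := mem_drop_leq sorted_t hx; rewrite /=; lia.
- rewrite /= nth_take; last lia.
  exact: (part_geq (a := 1) (b := 2) sorted_mu).
- by move: rk; rewrite size_drop /=; lia.
- by rewrite /Pform cat_take_drop.
Qed.

Lemma Q3_conditions m n l : Q3 m n l ->
  [/\ 0 < durfee_j m l, durfee_j m l < part l (m + durfee_j m l),
      part l (m + durfee_j m l).+1 = durfee_j m l,
      1 \in drop (m + durfee_j m l).+1 l & part l 1 + m < size l].
Proof.
case=> [[/andP[/andP[sorted_l pos] _] rk]] [j_gt0 hsz ha hb].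
have ok := durfee_j_ok m l; have next := durfee_j_next m l.
have size_mj : m + durfee_j m l <= size l by apply: part_gt0_size; lia.
rewrite durfee_alphaE // in hsz ha; rewrite /durfee_beta in hsz hb.
move: (durfee_j m l) j_gt0 ok next size_mj hsz ha hb => j j_gt0 ok next size_mj hsz ha hb.
set s := [seq x - j | x <- take (m + j) l] in hsz ha.
have sorted_s : sorted geq s.
  by apply: homo_sorted (take_sorted _ sorted_l) => x y /=; apply: leq_sub2r.
have p_gt : {in take (m + j) l, forall x, j < x}.
  have : count (fun x => 0 < x) s == size s by rewrite size_map size_takel // -part_conj1 ha.
  by rewrite -all_count all_map => /allP hx x /hx; rewrite /= subn_gt0.
have last_l : j < part l (m + j) by apply/p_gt/part_in_take; lia.
have next_l : part l (m + j).+1 = j by apply/(in_rankset_durfee sorted_l j_gt0 last_l next).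
have first_l : part l (m + j) <= part l 1 by apply: part_geq; lia.
have size_l : part l 1 + m < size l.
  move: hsz; rewrite size_conj foldr_maxn_sorted // -nth0 (nth_map 0) ?size_takel //; last lia.
  by rewrite nth_take ?size_drop /=; lia.
split=> //; move: hb; rewrite (drop_nth 0) /=; last lia.
case=> min_one; have := foldr_minn_mem (nth 0 l (m + j)) (drop (m + j).+1 l).
rewrite min_one inE => /orP[/eqP one_j | //].
have lt_r : (m + j).+1 < size l by lia.
have y_gt0 : 0 < nth 0 l (m + j).+1 by apply: (allP pos); apply: mem_nth.
have y_le : nth 0 l (m + j).+1 <= 1 by rewrite one_j; apply: nth_geq.
have : nth 0 l (m + j).+1 \in drop (m + j).+1 l.
  by rewrite -[X in nth 0 l X]addn0 -nth_drop mem_nth // size_drop subn_gt0.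
by have -> : nth 0 l (m + j).+1 = 1 by lia.
Qed.

Lemma Qform_decomposition m j l : is_partition l -> 0 < j -> j < part l (m + j) ->
  part l (m + j).+1 = j -> 1 \in drop (m + j).+1 l -> part l 1 + m < size l ->
  exists p d c, [/\ blocks m j p d, 0 < c, part p 1 <= j + size d + c & l = Qform j p d c].
Proof.
move=> /andP[sorted_l pos] j_gt0 last_l next_l one_r size_l.
have first_l : part l (m + j) <= part l 1 by apply: part_geq; lia.
set r := drop (m + j).+1 l.
have sorted_r : sorted geq r := drop_sorted _ sorted_l.
have r_le : {in r, forall x, x <= j}.
  move=> x /(mem_drop_leq sorted_l) hx.
  by have := part_geq (a := (m + j).+1) (b := (m + j).+2) sorted_l; lia.
have pos_r : all (fun x => 0 < x) r by apply/allP => x /mem_drop /(allP pos).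
have r_eq := split_ones sorted_r pos_r.
have l_eq : l = take (m + j) l ++ j :: r.
  by rewrite -[in j :: _]next_l /= -drop_nth ?cat_take_drop //; lia.
exists (take (m + j) l), [seq x.-1 | x <- r & 1 < x], (count (pred1 1) r); split.
- split=> //; first by rewrite size_takel //; lia.
  + exact: take_sorted.
  + by apply/allP => x /(mem_take_geq sorted_l); lia.
  + apply: (homo_sorted (e := geq)) (sorted_filter geq_trans _ sorted_r) => x y /=; lia.
  + by apply/allP => y /mapP[x]; rewrite mem_filter => /andP[x_gt1 /r_le x_le] ->; lia.
- by rewrite -has_count has_pred1.
- have := congr1 size r_eq; rewrite size_cat size_map size_nseq size_drop.
  by move: size_l; rewrite /= nth_take; lia.
- by rewrite /Qform -r_eq.
Qed.

Lemma Q3_blocks m n l : Q3 m n l ->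
  exists j p d c, [/\ blocks m j p d, 0 < c, part p 1 <= j + size d + c & l = Qform j p d c].
Proof.
move=> hQ; have [j_gt0 last_l next_l one_r size_l] := Q3_conditions hQ.
case: hQ => [[/andP[part_l _] _] _].
by exists (durfee_j m l); apply: Qform_decomposition.
Qed.

Theorem lemma4p3 (m n : nat) (hn : (1 <= n)%N) :
  exists (f g : seq nat -> seq nat),
    [/\ (forall l, Q3 m n l -> P3 m n (f l)),
        (forall mu, P3 m n mu -> Q3 m n (g mu)),
        (forall l, Q3 m n l -> g (f l) = l) &
        (forall mu, P3 m n mu -> f (g mu) = mu)].
Proof.
exists (Q_to_P m), (P_to_Q m); split.
- move=> l /[dup] [[[/andP[_ /eqP <-] _] _]] /Q3_blocks [j [p [d [c [blk c_gt0 hp ->]]]]].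
  rewrite (Q_to_P_Qform blk) (sumn_Qform blk).
  by apply: (P3_Pform blk) => //; lia.
- move=> mu /[dup] [[[/andP[_ /eqP <-] _] _]] /P3_blocks [h [j [p [d [blk hp hh ->]]]]].
  rewrite (P_to_Q_Pform blk hp); apply: (Q3_Qform blk); try lia.
  by rewrite (sumn_Qform blk); congr (sumn (Pform _ _ _)); lia.
- move=> l /Q3_blocks [j [p [d [c [blk c_gt0 hp ->]]]]].
  by rewrite (Q_to_P_Qform blk) (P_to_Q_Pform blk) //; congr Qform; lia.
- move=> mu /P3_blocks [h [j [p [d [blk hp hh ->]]]]].
  by rewrite (P_to_Q_Pform blk hp) (Q_to_P_Qform blk); congr Pform; lia.
Qed.
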